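(* For every integer $n\ge1$, $$F_{2n-1}=\sum_{(a_1,\dots,a_k)\in C(n)}2^{\#\{i\,:\,a_i=1\}+n-2k},$$ where $k$ is the number of parts of the composition.
   Context: $C(n)$ is the set of all compositions $(a_1,\dots,a_k)$ of $n$ (sequences of positive integers with sum $n$, any number of parts). Fibonacci numbers: $F_0=0$, $F_1=1$, $F_n=F_{n-1}+F_{n-2}$. *)

From mathcomp Require Import all_boot.
Set Implicit Arguments. Unset Strict Implicit. Unset Printing Implicit Defensive.

Fixpoint fib (n : nat) : nat :=
  match n with
  | 0 => 0
  | 1 => 1
  | (m.+1 as p).+1 => fib p + fib m
  end.

Definition is_composition (n : nat) (s : seq nat) : bool :=
  all (fun a => 0 < a) s && (sumn s == n).

Fixpoint bounded_seqs (b m : nat) : seq (seq nat) :=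
  match m with
  | 0 => [:: [::]]
  | m'.+1 => [::] :: [seq a :: s | a <- iota 1 b, s <- bounded_seqs b m']
  end.

(* C(n): the list of all compositions of n (every composition of n has
   at most n parts, each at most n, so it occurs exactly once here). *)
Definition compositions (n : nat) : seq (seq nat) :=
  [seq s <- bounded_seqs n n | is_composition n s].

From mathcomp Require Import all_boot.
From mathcomp Require Import zify.

(* Write T n = F_(2n-1) for n >= 1 and T 0 = 1, and give a part
   a of a composition the weight 2^((a == 1) + a - 2), i.e. 1 for a = 1 and
   2^(a-2) for a >= 2.  The weight of a composition in the theorem is the
   product of the weights of its parts, so splitting off the first part shows
   that the weighted count W n of compositions of n satisfies
   W 0 = 1 and W n = sum_(1 <= a <= n) weight(a) * W (n - a).
   On the Fibonacci side, T (k+2) + T k = 3 T (k+1) implies that T satisfies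
   the same convolution recursion, hence W = T by strong induction. *)

Definition oddfib (n : nat) : nat := if n is k.+1 then fib (2 * k + 1) else 1.

Definition part_weight (a : nat) : nat := 2 ^ ((a == 1) + a - 2).

Definition comp_weight (s : seq nat) : nat :=
  2 ^ (count_mem 1 s + sumn s - 2 * size s).

Lemma oddfib_rec k : oddfib k.+2 + oddfib k = 3 * oddfib k.+1.
Proof.
case: k => [//|j]; rewrite /oddfib.
have -> : 2 * j.+2 + 1 = (2 * j + 1).+4 by lia.
have -> : 2 * j.+1 + 1 = (2 * j + 1).+2 by lia.
rewrite /=; lia.
Qed.

Definition tail_sum (k : nat) : nat := \sum_(i < k) 2 ^ i * oddfib (k - 1 - i).

Lemma tail_sumS k : tail_sum k.+1 = oddfib k + 2 * tail_sum k.
Proof.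
rewrite /tail_sum big_ord_recl /= expn0 mul1n subn0 subn1 /=; congr (_ + _).
rewrite big_distrr /=; apply: eq_bigr => i _.
rewrite /bump /= add1n expnS mulnA; congr (_ * oddfib _); lia.
Qed.

Lemma oddfibS_tail k : oddfib k.+1 = oddfib k + tail_sum k.
Proof.
elim: k => [|k IH]; first by rewrite /tail_sum big_ord0.
have := oddfib_rec k; rewrite tail_sumS; lia.
Qed.

Lemma oddfib_conv n : 0 < n ->
  \sum_(1 <= a < n.+1) part_weight a * oddfib (n - a) = oddfib n.
Proof.
case: n => [//|k] _.
rewrite oddfibS_tail big_nat_recl // /part_weight /= mul1n subSS subn0.
congr (_ + _).
rewrite -(add0n 1) big_addn subn1 /= big_mkord /tail_sum.
apply: eq_bigr => i _; rewrite !addn1 add0n /=.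
by congr (2 ^ _ * oddfib _); lia.
Qed.

(* The exponent in [comp_weight] never truncates for positive parts. *)
Lemma twice_size_le s : all (fun a => 0 < a) s ->
  2 * size s <= count_mem 1 s + sumn s.
Proof.
elim: s => [//|a s IH] /= /andP [Ha Hs].
by have := IH Hs; case: eqP => [->|a_neq1] /=; lia.
Qed.

Lemma comp_weight_cons a s : 0 < a -> all (fun a => 0 < a) s ->
  comp_weight (a :: s) = part_weight a * comp_weight s.
Proof.
move=> Ha Hs; rewrite /comp_weight /part_weight -expnD; congr (2 ^ _).
by have := twice_size_le s Hs; case: eqP => [->|a_neq1] /=; lia.
Qed.

Definition bounded_weight (b m n : nat) : nat :=
  \sum_(s <- bounded_seqs b m | is_composition n s) comp_weight s.

Lemma bounded_weightS b m n : bounded_weight b m.+1 n =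
  (n == 0) + \sum_(a <- iota 1 b)
               (if a <= n then part_weight a * bounded_weight b m (n - a) else 0).
Proof.
rewrite {1}/bounded_weight /= big_cons.
have -> : is_composition n [::] = (n == 0) by rewrite /is_composition /= eq_sym.
set tail := bigop _ _ _; set conv := (X in _ = _ + X).
suff -> : tail = conv by case: (n == 0).
rewrite /tail /conv big_mkcond big_allpairs_dep /=.
apply: eq_big_seq => a; rewrite mem_iota => /andP [Ha _].
case: ifP => Han.
- rewrite big_distrr [RHS]big_mkcond /=; apply: eq_bigr => s _.
  rewrite /is_composition /= Ha /=; case Hs: (all _ _) => //=.
  have -> : (a + sumn s == n) = (sumn s == n - a) by apply/eqP/eqP; lia.
  by case: ifP => // _; rewrite comp_weight_cons.
- rewrite big1 // => s _; rewrite /is_composition /= Ha /=.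
  by case: (all _ _) => //=; case: eqP => //; lia.
Qed.

Lemma sum_parts_upto (F : nat -> nat) b n : n <= b ->
  \sum_(a <- iota 1 b) (if a <= n then F a else 0) = \sum_(1 <= a < n.+1) F a.
Proof.
move=> Hnb; have -> : iota 1 b = index_iota 1 b.+1 by rewrite /index_iota subn1.
rewrite (big_cat_nat (n := n.+1)) //=.
rewrite [X in _ + X = _]big_nat_cond [X in _ + X = _]big1 ?addn0; last first.
  by move=> a /andP [/andP [Ha _] _]; case: ifP => //; lia.
by apply: eq_big_nat => a /andP [_ Ha]; rewrite -ltnS Ha.
Qed.

Lemma bounded_weight_oddfib n b m : n <= b -> n <= m ->
  bounded_weight b m n = oddfib n.
Proof.
elim/ltn_ind: n b m => n IH b [|m] Hb Hm.
  have -> : n = 0 by lia.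
  by rewrite /bounded_weight /= big_cons big_nil.
rewrite bounded_weightS; case: n IH Hb Hm => [|n] IH Hb Hm.
  by rewrite big1_seq // => a /andP [_]; rewrite mem_iota; case: a.
rewrite add0n -(oddfib_conv _ (ltn0Sn n)) -(sum_parts_upto _ _ _ Hb).
rewrite !big_seq; apply: eq_bigr => a; rewrite mem_iota => /andP [Ha _].
by case: ifP => // Han; rewrite IH //; lia.
Qed.

Theorem mainTheorem14 (n : nat) : 1 <= n ->
  fib (2 * n - 1) =
  \sum_(s <- compositions n) 2 ^ (count_mem 1 s + n - 2 * size s).
Proof.
move=> Hn.
have -> : fib (2 * n - 1) = oddfib n.
  by case: n Hn => // k _; rewrite /oddfib; congr fib; lia.
rewrite -(bounded_weight_oddfib n n n (leqnn n) (leqnn n)).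
rewrite /bounded_weight /compositions big_filter.
by apply: eq_bigr => s /andP [_ /eqP <-].
Qed.
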